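(* Let $n\in\mathbb N$. Then there exists $k_0\in\mathbb N$ such that for all $k,j\in\mathbb N$ with $j\ge k\ge k_0$, $$p^{(j)}_n\le 2^{j-k}p^{(k)}_n\prod_{i=1}^{j-k}\left(\log p^{(k)}_n+i\log i\,\log\log p^{(k)}_n\right).$$
   Context: Let $p_n$ denote the $n$-th prime number. Define $p^{(0)}_n=n$ and recursively $p^{(k+1)}_n=p_{p^{(k)}_n}$ for $k\in\mathbb N_0$. $\log$ is the natural logarithm; an empty product equals $1$. *)

From mathcomp Require Import all_boot.
From Stdlib Require Import Reals.

Lemma next_prime_ex (m : nat) : exists p, (m < p) && prime p.
Proof. by case: (prime_above m) => p H1 H2; exists p; apply/andP. Qed.

Definition next_prime (m : nat) : nat := ex_minn (next_prime_ex m).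

(* p_n, the n-th prime (1-indexed): p_1 = 2, p_2 = 3, ...; p_0 := 0 (unused) *)
Definition nth_prime (n : nat) : nat := iter n next_prime 0.

Definition iter_prime (k n : nat) : nat := iter k nth_prime n.

Definition prodR (m : nat) (f : nat -> R) : R :=
  foldr Rmult 1%R (map f (iota 1 m)).

(* Chebyshev's elementary estimate 4^n <= (2n+1) C(2n,n) <= (2n+1) (2n)^pi(2n), where each
   prime power dividing C(2n,n) is at most 2n by Legendre's formula, gives
   pi(2n) ln(2n) >~ 2n ln 2 and hence p_m <= 2 m ln m for all large m.
   Put x = p^(k)_n, a_l = ln x + l ln l ln ln x and B_i = 2^i x a_1 ... a_i.  As
   (l+1) ln(l+1) - l ln l >= ln l + 1, the increments of a dominate its logarithm:
   ln 2 + ln a_(i+1) <= a_(i+2) - a_(i+1) once ln ln x >= 5, so ln B_i <= a_(i+1) by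
   induction.  Hence p^(k+i)_n <= B_i implies
   p^(k+i+1)_n <= 2 B_i ln B_i <= 2 B_i a_(i+1) = B_(i+1). *)

From mathcomp Require Import all_boot zify.

Lemma exp4_le_central_binomial n : 4 ^ n <= (2 * n).+1 * 'C(2 * n, n).
Proof.
elim: n => [|n IH] //.
have recS : (2 * n).+1 * 'C(2 * n, n) = n.+1 * 'C((2 * n).+1, n).
  by have /= -> := mul_bin_down (2 * n).+1 n; congr (_ * _); lia.
have recSS : (2 * n).+2 * 'C((2 * n).+1, n) = n.+1 * 'C(2 * n.+1, n.+1).
  by have := mul_bin_diag (2 * n.+1) n; rewrite mulnS.
rewrite expnS; nia.
Qed.

Lemma sum_divn_expn_stable p n a b : 1 < p -> n < p ^ a.+1 -> a <= b ->
  \sum_(1 <= k < b.+1) n %/ p ^ k = \sum_(1 <= k < a.+1) n %/ p ^ k.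
Proof.
move=> p_gt1 lt_n_pa le_ab; rewrite (big_cat_nat _ _ (n := a.+1)) //=.
rewrite [X in _ + X]big1_seq ?addn0 // => k /andP[_]; rewrite mem_index_iota => /andP[lt_ak _].
by rewrite divn_small // (leq_trans lt_n_pa) // leq_exp2l.
Qed.

Lemma logn_fact_trunc p n m : prime p -> n < p ^ m.+1 ->
  logn p n`! = \sum_(1 <= k < m.+1) n %/ p ^ k.
Proof.
move=> p_pr lt_n_pm; have p_gt1 := prime_gt1 p_pr.
have lt_n_pn : n < p ^ n.+1 by rewrite (leq_trans (ltn_expl n p_gt1)) // leq_pexp2l // ltnW.
rewrite logn_fact // -(sum_divn_expn_stable _ _ _ _ p_gt1 lt_n_pn (leq_maxr m n)).
exact: sum_divn_expn_stable lt_n_pm (leq_maxl m n).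
Qed.

Lemma divn_double_le n d : 0 < d -> (2 * n) %/ d <= 2 * (n %/ d) + 1.
Proof. move=> d_gt0; rewrite -ltnS ltn_divLR //; have := ltn_ceil n d_gt0; nia. Qed.

Lemma logn_central_binomial p n : prime p -> logn p 'C(2 * n, n) <= trunc_log p (2 * n).
Proof.
move=> p_pr; have p_gt1 := prime_gt1 p_pr.
have le_n2n : n <= 2 * n by lia.
have : logn p (2 * n)`! = logn p 'C(2 * n, n) + 2 * logn p n`!.
  have := bin_fact le_n2n; rewrite (_ : 2 * n - n = n); last by lia.
  by move <-; rewrite !lognM ?muln_gt0 ?fact_gt0 ?bin_gt0 ?le_n2n //; lia.
set T := trunc_log p (2 * n).
have lt_2n_pT : 2 * n < p ^ T.+1 := trunc_log_ltn _ p_gt1.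
rewrite (logn_fact_trunc _ _ _ p_pr lt_2n_pT) (logn_fact_trunc _ n T p_pr); last by lia.
have : \sum_(1 <= k < T.+1) (2 * n) %/ p ^ k <= \sum_(1 <= k < T.+1) (2 * (n %/ p ^ k) + 1).
  by apply: leq_sum => k _; rewrite divn_double_le // expn_gt0 ltnW.
rewrite big_split /= -big_distrr sum_nat_const_nat /=; lia.
Qed.

Definition prime_pi N := count prime (iota 0 N.+1).

Lemma prime_piS N : prime_pi N.+1 = prime_pi N + prime N.+1.
Proof. by rewrite /prime_pi -addn1 iotaD count_cat /= addn0. Qed.

Lemma prime_pi_cat a d : prime_pi (a + d) = prime_pi a + count prime (iota a.+1 d).
Proof. by rewrite /prime_pi -addSn iotaD count_cat. Qed.

Lemma leq_prime_pi a b : a <= b -> prime_pi a <= prime_pi b.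
Proof. by move=> le_ab; rewrite -(subnKC le_ab) prime_pi_cat leq_addr. Qed.

Lemma next_primeP m :
  [/\ m < next_prime m, prime (next_prime m) &
      forall q, m < q -> prime q -> next_prime m <= q].
Proof.
rewrite /next_prime; case: ex_minnP => p /andP[lt_mp p_pr] min_p.
by split=> // q lt_mq q_pr; apply: min_p; rewrite lt_mq.
Qed.

Lemma prime_pi_below_next_prime a N : a <= N < next_prime a -> prime_pi N = prime_pi a.
Proof.
case/andP=> le_aN lt_N_next; have [_ _ min_next] := next_primeP a.
rewrite -(subnKC le_aN) prime_pi_cat; suff -> : count prime (iota a.+1 (N - a)) = 0 by rewrite addn0.
apply/eqP; rewrite eqn0Ngt -has_count; apply/hasPn => q; rewrite mem_iota => /andP[lt_aq lt_q].
by apply/negP => /(min_next q lt_aq); lia.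
Qed.

Lemma prime_pi_next_prime a : prime_pi (next_prime a) = (prime_pi a).+1.
Proof.
have [lt_a_next next_pr _] := next_primeP a.
have def_next : next_prime a = (next_prime a).-1.+1 by lia.
rewrite def_next prime_piS -def_next next_pr addn1 (prime_pi_below_next_prime a) //; lia.
Qed.

Lemma nth_primeS m : nth_prime m.+1 = next_prime (nth_prime m).
Proof. by []. Qed.

Lemma prime_pi_nth_prime m : prime_pi (nth_prime m) = m.
Proof. by elim: m => [|m IHm] //; rewrite nth_primeS prime_pi_next_prime IHm. Qed.

Lemma ltn_nth_prime m : 0 < m -> m < nth_prime m.
Proof.
elim: m => // m IHm _; rewrite nth_primeS; have [lt_next next_pr _] := next_primeP (nth_prime m).
by case: m IHm lt_next next_pr => [|m] IHm lt_next; [move/prime_gt1 | have := IHm isT; lia].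
Qed.

Lemma leq_nth_prime m : m <= nth_prime m.
Proof. by case: m => // m; apply/ltnW/ltn_nth_prime. Qed.

Lemma leq_iter_nth_prime i m : m <= iter i nth_prime m.
Proof. by elim: i => //= i IHi; apply: leq_trans IHi (leq_nth_prime _). Qed.

Lemma iter_prime_ge k n : 0 < n -> k + n <= iter_prime k n.
Proof.
move=> n_gt0; elim: k => // k IHk.
by rewrite /iter_prime iterS -/(iter_prime k n) addSn (leq_trans _ (ltn_nth_prime _ _)); lia.
Qed.

Lemma nth_prime_leq m N : 0 < m -> m <= prime_pi N -> nth_prime m <= N.
Proof.
case: m => // m _ le_m_piN; rewrite leqNgt; apply/negP => lt_N.
have [lt_next _ _] := next_primeP (nth_prime m).
have : prime_pi (maxn N (nth_prime m)) = m.
  rewrite (prime_pi_below_next_prime (nth_prime m)) ?prime_pi_nth_prime //.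
  by rewrite leq_maxr gtn_max lt_N lt_next.
by have := leq_prime_pi _ _ (leq_maxl N (nth_prime m)); lia.
Qed.

Lemma central_binomial_le n : 0 < n -> 'C(2 * n, n) <= (2 * n) ^ prime_pi (2 * n).
Proof.
move=> n_gt0; have C_gt0 : 0 < 'C(2 * n, n) by rewrite bin_gt0; lia.
have pfactor_le p : p \in primes 'C(2 * n, n) -> p ^ logn p 'C(2 * n, n) <= 2 * n.
  rewrite mem_primes => /and3P[p_pr _ _]; have p_gt1 := prime_gt1 p_pr.
  apply: leq_trans (trunc_logP p_gt1 _); last by lia.
  by rewrite leq_exp2l // logn_central_binomial.
rewrite {1}(prod_prime_decomp C_gt0) prime_decompE big_map /=.
apply: (@leq_trans (\prod_(p <- primes 'C(2 * n, n)) (2 * n))).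
  by rewrite big_seq [leqRHS]big_seq; apply: leq_prod => p /pfactor_le.
rewrite big_const_seq count_predT iter_muln_1 leq_pexp2l //; first by lia.
rewrite /prime_pi -size_filter uniq_leq_size ?primes_uniq // => p p_C.
have p_pr : prime p by move: p_C; rewrite mem_primes => /andP[].
have : p <= p ^ logn p 'C(2 * n, n) by rewrite -{1}(expn1 p) leq_exp2l ?prime_gt1 ?logn_gt0.
by rewrite mem_filter mem_iota p_pr /=; have := pfactor_le p p_C; lia.
Qed.

Lemma exp4_le_prime_pi n : 0 < n -> 4 ^ n <= (2 * n).+1 * (2 * n) ^ prime_pi (2 * n).
Proof.
move=> n_gt0; rewrite (leq_trans (exp4_le_central_binomial n)) //.
by rewrite leq_mul2l central_binomial_le ?orbT.
Qed.

(* Imported only here: Reals rebinds [_ ^ _] on nat to [Nat.pow]. *)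
From Stdlib Require Import Reals Lra.

Open Scope R_scope.

Lemma ln_le x y : 0 < x -> x <= y -> ln x <= ln y.
Proof. by move=> x_gt0 [/(ln_increasing _ _ x_gt0)/Rlt_le | ->]; [| apply: Rle_refl]. Qed.

Lemma ln_ge0 x : 1 <= x -> 0 <= ln x.
Proof. by move=> x_ge1; rewrite -ln_1; apply: ln_le; lra. Qed.

Lemma ln_le_sub1 x : 0 < x -> ln x <= x - 1.
Proof. by move=> x_gt0; have := exp_ineq1_le (ln x); rewrite exp_ln //; lra. Qed.

Lemma ln2_ge : 3 / 5 <= ln 2.
Proof.
have e_le3 := exp_le_3; have e_gt0 := exp_pos 1.
have : ln (exp 1 ^ 3) < ln (2 ^ 5).
  apply: ln_increasing; first exact: pow_lt.
  have : exp 1 ^ 3 <= 3 ^ 3 by apply: pow_incr; lra.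
  by rewrite /=; lra.
by rewrite !ln_pow ?ln_exp //=; lra.
Qed.

Lemma ln_le_div10 u : 400 <= u -> ln u <= u / 10.
Proof.
move=> u_ge; have {1}-> : u = 20 * (u / 20) by field.
rewrite ln_mult; [| lra | lra].
by have := ln_le_sub1 20; have := ln_le_sub1 (u / 20); lra.
Qed.

Lemma mul_ln_succ_sub_ge t : 0 < t -> ln t + 1 <= (t + 1) * ln (t + 1) - t * ln t.
Proof.
move=> t_gt0.
have : ln t - ln (t + 1) <= - / (t + 1).
  rewrite /Rminus -ln_Rinv -?ln_mult; [| lra | by apply: Rinv_0_lt_compat; lra | lra].
  apply: Rle_trans (ln_le_sub1 _ _) _; first by apply: Rdiv_lt_0_compat; lra.
  by apply: Req_le; field; lra.
move/(Rmult_le_compat_l (t + 1)) => /(_ ltac:(lra)).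
by rewrite (_ : (t + 1) * - / (t + 1) = -1); [lra | field; lra].
Qed.

Lemma INR_mul_ln_ge0 l : 0 <= INR l * ln (INR l).
Proof.
case: l => [|l]; first by rewrite Rmult_0_l; apply: Rle_refl.
by apply: Rmult_le_pos; [apply: pos_INR | apply: ln_ge0; apply: (le_INR 1); apply/leP].
Qed.

Lemma nat_floor_ex r : 0 <= r -> exists n : nat, INR n <= r < INR n + 1.
Proof.
move=> r_ge0; have [N] := INR_unbounded r; elim: N => [/= | N IHN]; first by lra.
rewrite S_INR => lt_r_N; case: (Rlt_le_dec r (INR N)); first exact: IHN.
by exists N; lra.
Qed.

Lemma INR_expn a b : INR (expn a b) = INR a ^ b.
Proof. by elim: b => [|b IHb] //; rewrite expnS mult_INR IHb. Qed.

Lemma prime_pi_lower_bound (n : nat) : (0 < n)%nat ->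
  (2 * INR n - 1) * ln 2 <= (INR (prime_pi (2 * n)%nat) + 1) * ln (2 * INR n).
Proof.
move=> n_gt0; have n_ge1 : 1 <= INR n by apply: (le_INR 1); apply/leP.
have ln_odd : ln (2 * INR n + 1) <= ln 2 + ln (2 * INR n).
  by rewrite -ln_mult; try lra; apply: ln_le; lra.
have := exp4_le_prime_pi n n_gt0 => /leP/le_INR.
rewrite mult_INR !INR_expn [INR (2 * n).+1]S_INR.
have -> : INR 4 = 2 * 2 by rewrite /=; ring.
have -> : INR (2 * n) = 2 * INR n by rewrite mult_INR /=; ring.
move/(ln_le _ _ (pow_lt (2 * 2) n ltac:(lra))).
have ln4 : ln (2 * 2) = 2 * ln 2 by rewrite ln_mult; lra.
by rewrite ln_mult ?ln_pow ?ln4; try apply: pow_lt; lra.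
Qed.

Lemma nth_prime_le_mul_ln : exists M : nat, forall m : nat, (M <= m)%nat ->
  INR (nth_prime m) <= 2 * INR m * ln (INR m).
Proof.
have [M lt_M] := INR_unbounded (exp 400); exists M => m le_Mm.
have lt_m : exp 400 < INR m by have := le_INR _ _ (elimT leP le_Mm); lra.
have m_ge1 : 1 <= INR m by have := exp_ineq1_le 400; lra.
have m_gt0 : (0 < m)%nat by apply/ltP/INR_lt; rewrite /=; lra.
set u := ln (INR m).
have u_ge : 400 <= u by rewrite -(ln_exp 400); apply: ln_le; [apply: exp_pos | lra].
have [n [le_n_mu lt_mu_n]] := nat_floor_ex (INR m * u) ltac:(nra).
have n_ge1 : 1 <= INR n by nra.
have n_gt0 : (0 < n)%nat by apply/ltP/INR_lt; rewrite /=; lra.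
suff /(nth_prime_leq _ _ m_gt0)/leP/le_INR : (m <= prime_pi (2 * n))%nat.
  by rewrite mult_INR /=; nra.
rewrite leqNgt; apply/negP => /leP/le_INR; rewrite S_INR => lt_pi_m.
have ln2n_le : ln (2 * INR n) <= 1 + 11 / 10 * u.
  have : ln (2 * INR n) <= ln 2 + (u + ln u).
    by rewrite -ln_mult -?ln_mult; try lra; apply: ln_le; nra.
  by have := ln_le_sub1 2; have := ln_le_div10 u u_ge; lra.
have lower := prime_pi_lower_bound n n_gt0; have ln2 := ln2_ge.
have ln2n_ge0 : 0 <= ln (2 * INR n) by apply: ln_ge0; lra.
nra.
Qed.

Lemma prodR_succ i f : prodR i.+1 f = prodR i f * f i.+1.
Proof.
rewrite /prodR -[i.+1]addn1 iotaD map_cat foldr_cat /= add1n Rmult_1_r.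
by rewrite addn1; elim: (map f (iota 1 i)) => [|y s IHs] /=; rewrite ?IHs; ring.
Qed.

Definition growth_factor (x : R) (l : nat) : R :=
  ln x + INR l * ln (INR l) * ln (ln x).

Definition growth_bound (x : R) (i : nat) : R :=
  2 ^ i * x * prodR i (growth_factor x).

Lemma growth_bound_succ x i :
  growth_bound x i.+1 = 2 * growth_bound x i * growth_factor x i.+1.
Proof. by rewrite /growth_bound prodR_succ /=; ring. Qed.

Section GrowthBound.

Variable x : R.
Hypothesis x_large : exp (exp 5) <= x.

Let x_gt0 : 0 < x.
Proof. by have := exp_pos (exp 5); lra. Qed.

Let ln_x_ge : exp 5 <= ln x.
Proof. by rewrite -(ln_exp (exp 5)); apply: ln_le; [apply: exp_pos |]. Qed.

Let ln_ln_x_ge : 5 <= ln (ln x).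
Proof. by rewrite -(ln_exp 5); apply: ln_le; [apply: exp_pos |]. Qed.

Lemma growth_factor_pos l : 0 < growth_factor x l.
Proof.
have := exp_pos 5; have := INR_mul_ln_ge0 l; rewrite /growth_factor; nra.
Qed.

Lemma growth_bound_pos i : 0 < growth_bound x i.
Proof.
elim: i => [|i IHi]; first by rewrite /growth_bound /prodR /=; lra.
by rewrite growth_bound_succ; have := growth_factor_pos i.+1; nra.
Qed.

Lemma ln_growth_factor_step i :
  ln 2 + ln (growth_factor x i.+1) <= growth_factor x i.+2 - growth_factor x i.+1.
Proof.
have ln2_le1 : ln 2 <= 1 by have := ln_le_sub1 2; lra.
have ln2_ge := ln2_ge; have := exp_pos 5; have := ln_x_ge; have := ln_ln_x_ge.
rewrite /growth_factor; set L := ln x => lnL_ge5 L_ge e5_gt0.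
have lnL_le_L : ln L <= L by have := ln_le_sub1 L ltac:(lra); lra.
case: i => [|i].
  (* a_1 = ln x, so here the increment 2 ln 2 ln ln x alone must absorb ln 2 + ln ln x. *)
  rewrite /= ln_1 Rmult_0_r Rmult_0_l Rplus_0_r (_ : 1 + 1 = 2); nra.
rewrite (S_INR i.+2); set t := INR i.+2.
have t_ge2 : 2 <= t by apply: (le_INR 2); apply/leP.
have t_ln_t : 0 <= t * ln t := INR_mul_ln_ge0 i.+2.
have ln_t_ge : ln 2 <= ln t by apply: ln_le; lra.
have incr : ln t + 1 <= (t + 1) * ln (t + 1) - t * ln t by apply: mul_ln_succ_sub_ge; lra.
have ln_factor : ln (L + t * ln t * ln L) <= ln L + 2 * ln t.
  have : L + t * ln t * ln L <= L * (t * t).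
    have : t * ln t <= t * (t - 1) by apply: Rmult_le_compat_l; [lra | apply: ln_le_sub1; lra].
    have : t * ln t * ln L <= t * ln t * L by apply: Rmult_le_compat_l.
    nra.
  by move/ln_le; rewrite !ln_mult; nra.
have : ln L * (ln t + 1) <= ln L * ((t + 1) * ln (t + 1) - t * ln t) by apply: Rmult_le_compat_l; lra.
have : 5 * ln t <= ln L * ln t by apply: Rmult_le_compat_r; lra.
lra.
Qed.

Lemma ln_growth_bound_le i : ln (growth_bound x i) <= growth_factor x i.+1.
Proof.
elim: i => [|i IHi].
  by rewrite /growth_bound /growth_factor /prodR /= ln_1 Rmult_1_l Rmult_1_r; lra.
have step := ln_growth_factor_step i; have a_pos := growth_factor_pos i.+1.
have B_pos := growth_bound_pos i.
by rewrite growth_bound_succ ln_mult ?(ln_mult 2); nra.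
Qed.

End GrowthBound.

Lemma iter_nth_prime_le_growth_bound (M x : nat) :
  (forall m : nat, (M <= m)%nat -> INR (nth_prime m) <= 2 * INR m * ln (INR m)) ->
  (M <= x)%nat -> exp (exp 5) <= INR x ->
  forall i, INR (iter i nth_prime x) <= growth_bound (INR x) i.
Proof.
move=> nth_prime_le le_Mx x_large; elim=> [|i IHi].
  by rewrite /growth_bound /prodR /=; lra.
have le_x_y := leq_iter_nth_prime i x; set y := iter i nth_prime x in IHi le_x_y *.
have y_ge1 : 1 <= INR y.
  have := le_INR _ _ (elimT leP le_x_y); have := exp_ineq1_le (exp 5); have := exp_pos 5.
  lra.
have ln_y_le : ln (INR y) <= growth_factor (INR x) i.+1.
  apply: Rle_trans (ln_growth_bound_le _ x_large i); apply: ln_le; lra.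
rewrite iterS growth_bound_succ.
apply: Rle_trans (nth_prime_le y (leq_trans le_Mx le_x_y)) _.
have := ln_ge0 _ y_ge1; have := growth_factor_pos _ x_large i.+1.
nra.
Qed.

(* With R_scope open, the statement's [(_ <= _)%N] would be read as a real inequality. *)
Close Scope R_scope.

Theorem theorem10 (n : nat) (hn : (1 <= n)%N) :
  exists k0 : nat, forall k j : nat, (k0 <= k)%N -> (k <= j)%N ->
    (INR (iter_prime j n) <=
     2 ^ (subn j k) * INR (iter_prime k n) *
     prodR (subn j k) (fun i : nat =>
       ln (INR (iter_prime k n)) +
       INR i * ln (INR i) * ln (ln (INR (iter_prime k n)))))%R.
Proof.
have [M nth_prime_le] := nth_prime_le_mul_ln.
have [K lt_K] := INR_unbounded (exp (exp 5)).
exists (maxn M K) => k j le_k le_kj.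
have le_iter := iter_prime_ge k n hn.
have -> : iter_prime j n = iter (j - k) nth_prime (iter_prime k n).
  by rewrite /iter_prime -iterD subnK.
apply: (iter_nth_prime_le_growth_bound M) => //; first by lia.
have le_K : (K <= iter_prime k n)%nat by lia.
by have := le_INR _ _ (elimT leP le_K); lra.
Qed.
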